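(* Let $\Lambda=(\mathbf a_1\ \cdots\ \mathbf a_m)$ be an $R$-characteristic map over $K$, and let $(\mathbf r^1,1),\dots,(\mathbf r^k,k)$ be reduced marked row vectors in $R^m$ with markings $1,\dots,k$ respectively ($k\ge1$). Then the matrix $\operatorname{proj}_{k_1}M(\Lambda;\mathbf r^1,\dots,\mathbf r^k)$, with its column $k_2$ relabeled $k$, is D-J equivalent (equal up to left multiplication by $GL_{n+k-1}(R)$) to $M\big(\Lambda^{\mathbf r^k};(\mathbf r^1)^{\mathbf r^k},\dots,(\mathbf r^{k-1})^{\mathbf r^k}\big)$.
   Context: $R\in\{\mathbb Z,\mathbb Z_2\}$; $K$ is an $(n-1)$-dimensional star-shaped simplicial sphere on $[m]$; an $R$-characteristic map $\Lambda:[m]\to R^n$ sends the vertices of each $(n-1)$-face to a $\mathbb Z$-basis of $\mathbb Z^n$ ($R=\mathbb Z$) or a basis of $\mathbb Z_2^n$ ($R=\mathbb Z_2$); it is written as the $n\times m$ matrix with columns $\mathbf a_i=\Lambda(i)$. A marked row vector is a pair $(\mathbf r,v)$ with $\mathbf r=(r_1,\dots,r_m)\in R^m$ and $v\in[m]$ (the marking); it is reduced if $r_v=0$. For marked row vectors $(\mathbf r^t,t)$, $t=1,\dots,k$, $M(\Lambda;\mathbf r^1,\dots,\mathbf r^k)$ is the $(n+k)\times(m+k)$ matrix with columns labeled $1_1,1_2,2_1,2_2,\dots,k_1,k_2,k+1,\dots,m$, whose top $n$ rows have $\mathbf a_i$ in columns $i_1$ ($i\le k$) and $i$ ($i>k$)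 and $0$ in columns $i_2$, and whose row $n+t$ has entry $r^t_i-\delta_{it}$ in column $i_1$, $\delta_{it}$ in column $i_2$ ($i\le k$), and $r^t_i$ in column $i$ ($i>k$). For a matrix $M$ and a column $c$ of $M$ which is part of a basis of $R^N$ (primitive), $\operatorname{proj}_cM$ is obtained by choosing $g\in GL_N(R)$ with $g\,M_c$ the last standard basis vector and deleting from $gM$ the last row and column $c$ (defined up to left multiplication by $GL_{N-1}(R)$). For a reduced marked row vector $(\mathbf s,w)$, $\Lambda^{\mathbf s}$ is the $n\times m$ matrix whose $w$-th column is $\mathbf a_w$ and whose $i$-th column is $\mathbf a_i+s_i\mathbf a_w$ for $i\ne w$. For reduced marked row vectors $(\mathbf r,v)$, $(\mathbf s,w)$ with $v\ne w$, $\mathbf r^{\mathbf s}$ is the marked row vector with marking $v$ and entries $(\mathbf r^{\mathbf s})_w=r_w$ and $(\mathbf r^{\mathbf s})_i=r_i+s_ir_w$ for $i\ne w$. *)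

From HB Require Import structures.
From mathcomp Require Import all_boot all_order all_algebra.
Set Implicit Arguments. Unset Strict Implicit. Unset Printing Implicit Defensive.
Import GRing.Theory.
Local Open Scope ring_scope.

Inductive coeff := CZ | CZ2.
Definition R_of (c : coeff) : comUnitRingType :=
  match c with CZ => int | CZ2 => 'F_2 end.

(* K is given by its facets ((n-1)-faces), subsets of the vertex set [m] = 'I_m;
   vertices are 0-based. K is (n-1)-dimensional: every facet has n vertices. *)
Definition facets_of_dim (m n : nat) (K : {set {set 'I_m}}) : Prop :=
  forall s, s \in K -> #|s| = n.

(* Λ : 'M_(n,m) is an R-characteristic map over K: for every facet σ, the columns
   a_i (i ∈ σ) form a basis of R^n, i.e. listing the n vertices of σ by a
   bijection f : 'I_n -> σ, the n×n matrix (a_{f 0} ... a_{f (n-1)}) is invertible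
   over R (for R = ℤ: a ℤ-basis; for R = ℤ₂: a basis). *)
Definition char_map (R : comUnitRingType) (m n : nat) (K : {set {set 'I_m}})
    (L : 'M[R]_(n, m)) : Prop :=
  forall s, s \in K ->
    exists f : 'I_n -> 'I_m,
      [/\ injective f, (forall j, f j \in s) & colsub f L \in unitmx].

(* M(Λ; r^1,...,r^k), markings 1..k being the 0-based vertices 0..k-1.
   Rows: lshift a (a < n) = top rows, rshift t = row n+t.
   Columns: lshift i (i : 'I_m) = column i_1 if i < k, column i if i >= k;
            rshift t (t : 'I_k) = column t_2. *)
Definition markE (R : comUnitRingType) (k m : nat) : 'M[R]_(k, m) :=
  \matrix_(t < k, i < m) ((t : nat) == (i : nat))%:R.

Definition Mmat (R : comUnitRingType) (n m k : nat)
    (L : 'M[R]_(n, m)) (Rr : 'M[R]_(k, m)) : 'M[R]_(n + k, m + k) :=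
  block_mx L 0 (Rr - markE R k m) 1%:M.

Definition lamS (R : comUnitRingType) (n m : nat)
    (L : 'M[R]_(n, m)) (s : 'rV[R]_m) (w : 'I_m) : 'M[R]_(n, m) :=
  \matrix_(a < n, i < m) (if i == w then L a w else L a i + s 0 i * L a w).

Definition rowS (R : comUnitRingType) (m : nat)
    (r s : 'rV[R]_m) (w : 'I_m) : 'rV[R]_m :=
  \row_(i < m) (if i == w then r 0 i else r 0 i + s 0 i * r 0 w).

Lemma ltn_addnS (n k : nat) : (n + k < n + k.+1)%N.
Proof. by rewrite addnS. Qed.
Lemma leq_addnS (n k : nat) : (n + k <= n + k.+1)%N.
Proof. by rewrite addnS leqnSn. Qed.

Definition last_row (n k : nat) : 'I_(n + k.+1) := Ordinal (ltn_addnS n k).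
Definition init_row (n k : nat) (i : 'I_(n + k)) : 'I_(n + k.+1) :=
  widen_ord (leq_addnS n k) i.

Definition proj_witness (R : comUnitRingType) (n k L : nat)
    (A : 'M[R]_(n + k.+1, L)) (c : 'I_L) (g : 'M[R]_(n + k.+1)) : Prop :=
  g \in unitmx /\ g *m col c A = delta_mx (last_row n k) 0.

(* g*A with its last row deleted (columns still labelled as in A; the column c
   is deleted afterwards by selecting the remaining columns by label). *)
Definition drop_last_row (R : comUnitRingType) (n k L : nat)
    (B : 'M[R]_(n + k.+1, L)) : 'M[R]_(n + k, L) :=
  \matrix_(i < n + k, j < L) B (init_row i) j.

(* Column relabelling: a column label of M' = M(Λ^{r^k}; ...), which has
   markings 0..k'-1 (k = k'+1), is sent to the column of M = M(Λ; r^1..r^k)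
   with the same label, where the column k_2 of M is relabelled as the plain
   column k (0-based vertex vk = k').  Column k_1 of M is never hit. *)
Definition colmap (m k' : nat) (vk : 'I_m) (j : 'I_(m + k')) : 'I_(m + k'.+1) :=
  match split j with
  | inl i => if i == vk then rshift m (@ord_max k') else lshift k'.+1 i
  | inr t => rshift m (widen_ord (leqnSn k') t)
  end.

From HB Require Import structures.
From mathcomp Require Import all_boot all_order all_algebra.
From mathcomp Require Import ring.
Import GRing.Theory.
Local Open Scope ring_scope.

(* Two admissible g, g' in the definition of proj_c differ by g' g^-1, which
   fixes the last basis vector; its upper-left block is invertible and relates
   the two projections, so one choice suffices.  Reducedness of r^k makes the
   last entry of the column k_1 equal to -1, so the involution
   g0 = 1 + (M_{k_1} - e_N) e_N^T sends it to e_N.  Left multiplication by g0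
   adds M_{i,k_1} times the last row (the row of r^k) to every other row i:
   this turns a_j into a_j + r^k_j a_k and r^t_j into r^t_j + r^k_j r^t_k,
   while column k_2 becomes the column of the plain vertex k. *)

Set Implicit Arguments. Unset Strict Implicit. Unset Printing Implicit Defensive.

Section LastRow.
Variables (R : comUnitRingType) (n k : nat).
Local Notation N := (n + k.+1)%N.

Lemma init_row_neq_last (i : 'I_(n + k)) : (init_row i == last_row n k) = false.
Proof. by apply/negbTE; rewrite -val_eqE /= neq_ltn ltn_ord. Qed.

Lemma init_row_eq (i j : 'I_(n + k)) : (init_row i == init_row j) = (i == j).
Proof. by rewrite -!val_eqE. Qed.

Lemma big_init_last_row (F : 'I_N -> R) :
  \sum_j F j = \sum_i F (init_row i) + F (last_row n k).
Proof.
have e : N = (n + k).+1 by rewrite addnS.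
rewrite (reindex (cast_ord (esym e))) /=; last first.
  by exists (cast_ord e) => x _; apply/val_inj.
rewrite big_ord_recr /=; congr (_ + F _); last exact/val_inj.
by apply: eq_bigr => i _; congr F; apply/val_inj.
Qed.

Definition init_block (X : 'M[R]_N) : 'M[R]_(n + k) :=
  \matrix_(i, j) X (init_row i) (init_row j).

Lemma drop_last_row_mul L (X : 'M[R]_N) (Z : 'M[R]_(N, L)) :
    (forall i, X (init_row i) (last_row n k) = 0) ->
  drop_last_row (X *m Z) = init_block X *m drop_last_row Z.
Proof.
move=> X0; apply/matrixP => i j.
rewrite !mxE big_init_last_row X0 mul0r addr0.
by apply: eq_bigr => l _; rewrite !mxE.
Qed.

Lemma init_block_mul (X Y : 'M[R]_N) :
    (forall i, X (init_row i) (last_row n k) = 0) ->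
  init_block (X *m Y) = init_block X *m init_block Y.
Proof.
move=> X0; apply/matrixP => i j.
have /matrixP/(_ i (init_row j)) := drop_last_row_mul Y X0.
by rewrite !mxE => ->; apply: eq_bigr => l _; rewrite !mxE.
Qed.

Lemma init_block1 : init_block 1%:M = 1%:M.
Proof. by apply/matrixP => i j; rewrite !mxE init_row_eq. Qed.

Lemma proj_witness_equiv L (A : 'M[R]_(N, L)) (c : 'I_L) (g g' : 'M[R]_N) :
    proj_witness A c g -> proj_witness A c g' ->
  exists2 h, h \in unitmx & drop_last_row (g' *m A) = h *m drop_last_row (g *m A).
Proof.
move=> [gU gA] [g'U g'A].
set X := g' *m invmx g; set Y := g *m invmx g'.
have Xe : X *m delta_mx (last_row n k) 0 = delta_mx (last_row n k) 0 :> 'cV_N.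
  by rewrite -[in LHS]gA /X -mulmxA mulKmx.
have X0 i : X (init_row i) (last_row n k) = 0.
  have /matrixP/(_ (init_row i) 0) := Xe.
  by rewrite -colE !mxE init_row_neq_last.
have XY : X *m Y = 1%:M by rewrite /X /Y mulmxA mulmxKV // mulmxV.
exists (init_block X).
  have : init_block X *m init_block Y = 1%:M.
    by rewrite -init_block_mul // XY init_block1.
  by case/mulmx1_unit.
by rewrite -drop_last_row_mul // mulmxA mulmxKV.
Qed.

End LastRow.

Section Pivot.
Variables (R : comUnitRingType) (N : nat) (v : 'cV[R]_N) (l : 'I_N).

Definition pivot_mx : 'M[R]_N := 1%:M + (v - delta_mx l 0) *m delta_mx 0 l.

Lemma pivot_mxE L (A : 'M[R]_(N, L)) i j :
  (pivot_mx *m A) i j = A i j + (v i 0 - (i == l)%:R) * A l j.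
Proof.
rewrite mulmxDl mul1mx -mulmxA -rowE mxE; congr (_ + _).
by rewrite mxE big_ord1 !mxE eqxx andbT.
Qed.

Hypothesis v_l : v l 0 = -1.

Lemma pivot_mx_col : pivot_mx *m v = delta_mx l 0.
Proof.
by apply/matrixP => i j; rewrite ord1 pivot_mxE v_l !mxE andbT; ring.
Qed.

Lemma pivot_mxK : pivot_mx *m pivot_mx = 1%:M.
Proof.
apply/matrixP => i j.
rewrite pivot_mxE -[pivot_mx]mulmx1 !pivot_mxE !mxE eqxx v_l.
by case: (l == j) => /=; ring.
Qed.

Lemma pivot_mx_unit : pivot_mx \in unitmx.
Proof. by case: (mulmx1_unit pivot_mxK). Qed.

End Pivot.

Section MmatEntries.
Variables (R : comUnitRingType) (n m k : nat).
Variables (L : 'M[R]_(n, m)) (Rr : 'M[R]_(k, m)).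

Lemma MmatEul a x : Mmat L Rr (lshift k a) (lshift k x) = L a x.
Proof. by rewrite /Mmat block_mxEul. Qed.

Lemma MmatEur a t : Mmat L Rr (lshift k a) (rshift m t) = 0.
Proof. by rewrite /Mmat block_mxEur mxE. Qed.

Lemma MmatEdl t x :
  Mmat L Rr (rshift n t) (lshift k x) = Rr t x - ((t : nat) == x)%:R.
Proof. by rewrite /Mmat block_mxEdl !mxE. Qed.

Lemma MmatEdr t t' : Mmat L Rr (rshift n t) (rshift m t') = (t == t')%:R.
Proof. by rewrite /Mmat block_mxEdr !mxE. Qed.

End MmatEntries.

Lemma init_row_lshift n k (a : 'I_n) : init_row (lshift k a) = lshift k.+1 a.
Proof. exact: val_inj. Qed.

Lemma init_row_rshift n k (t : 'I_k) :
  init_row (rshift n t) = rshift n (widen_ord (leqnSn k) t).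
Proof. exact: val_inj. Qed.

Lemma last_rowE n k : last_row n k = rshift n ord_max.
Proof. exact: val_inj. Qed.

Lemma max_eq_widen_ord k (t : 'I_k) : (ord_max == widen_ord (leqnSn k) t) = false.
Proof. by apply/negbTE; rewrite -val_eqE /= neq_ltn ltn_ord orbT. Qed.

Section ProjMmat.
Local Arguments Mmat : simpl never.
Variables (R : comUnitRingType) (n m k : nat).
Variables (L : 'M[R]_(n, m)) (hk : (k.+1 <= m)%N) (Rr : 'M[R]_(k.+1, m)).
Let vk : 'I_m := Ordinal hk.
Let M := Mmat L Rr.
Let c1 : 'I_(m + k.+1) := lshift k.+1 vk.
Let rk := row ord_max Rr.
Let M' := Mmat (lamS L rk vk)
  (\matrix_(t < k, i < m) rowS (row (widen_ord (leqnSn k) t) Rr) rk vk 0 i).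

Hypothesis rk_reduced : Rr ord_max vk = 0.

Lemma col_Mmat_last : col c1 M (last_row n k) 0 = -1.
Proof. by rewrite mxE last_rowE MmatEdl rk_reduced eqxx sub0r. Qed.

Lemma eqn_vk (x : 'I_m) : (k == x)%N = (x == vk).
Proof. by rewrite eq_sym -val_eqE. Qed.

Lemma proj_pivot_Mmat :
  colsub (colmap vk)
    (drop_last_row (pivot_mx (col c1 M) (last_row n k) *m M)) = M'.
Proof.
apply/matrixP => i j.
rewrite 2![LHS]mxE pivot_mxE init_row_neq_last subr0 [col _ _ _ _]mxE.
rewrite last_rowE /M' /M /c1 /colmap -(splitK i) -(splitK j) unsplitK.
case: (split i) => [a|t]; case: (split j) => [x|t'] /=;
  rewrite ?init_row_lshift ?init_row_rshift.
- have [->|xv] := eqVneq x vk.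
    by rewrite MmatEur !MmatEul MmatEdr !mxE !eqxx /=; ring.
  by rewrite !MmatEul MmatEdl !mxE eqn_vk (negbTE xv) /=; ring.
- by rewrite !MmatEur MmatEdr max_eq_widen_ord mulr0 addr0.
- have [->|xv] := eqVneq x vk.
    rewrite !MmatEdr !MmatEdl eq_sym max_eq_widen_ord !mxE !eqxx /=.
    by rewrite (ltn_eqF (ltn_ord t)) /=; ring.
  rewrite !MmatEdl !mxE eqn_vk (negbTE xv) /=.
  by rewrite (ltn_eqF (ltn_ord t)) /=; ring.
- by rewrite !MmatEdr max_eq_widen_ord mulr0 addr0.
Qed.

End ProjMmat.

Theorem mainTheorem9 (c : coeff) (n m k' : nat)
    (K : {set {set 'I_m}}) (L : 'M[R_of c]_(n, m))
    (hK : facets_of_dim n K) (hL : char_map K L)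
    (hk : (k'.+1 <= m)%N) (Rr : 'M[R_of c]_(k'.+1, m))
    (hred : forall t : 'I_k'.+1, Rr t (widen_ord hk t) = 0) :
  let vk : 'I_m := Ordinal hk in
  let M := Mmat L Rr in
  let c1 : 'I_(m + k'.+1) := lshift k'.+1 vk in
  let rk := row ord_max Rr in
  let M' := Mmat (lamS L rk vk)
              (\matrix_(t < k', i < m)
                 rowS (row (widen_ord (leqnSn k') t) Rr) rk vk 0 i) in
  (exists g, proj_witness M c1 g) /\
  (forall g, proj_witness M c1 g ->
     exists h : 'M[R_of c]_(n + k'),
       h \in unitmx /\
       h *m colsub (colmap vk) (drop_last_row (g *m M)) = M').
Proof.
move=> vk M c1 rk M'.
have rk_reduced : Rr ord_max vk = 0.
  by rewrite -(hred ord_max); congr (Rr _ _); apply: val_inj.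
set g0 := pivot_mx (col c1 M) (last_row n k').
have g0_witness : proj_witness M c1 g0.
  split; first exact/pivot_mx_unit/col_Mmat_last.
  exact/pivot_mx_col/col_Mmat_last.
split=> [|g g_witness]; first by exists g0.
have [h hU drop_g0] := proj_witness_equiv g_witness g0_witness.
exists h; split=> //.
by rewrite mulmx_colsub -drop_g0 proj_pivot_Mmat.
Qed.
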